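(* Every Augé–Tapia operator of finite type is recurrent but not quasi-rigid.
   Context: Let $X$ be a separable infinite-dimensional complex Banach space and $T$ a bounded linear operator on $X$. Put $A_T=\{x\in X:\lim_n\|T^nx\|=\infty\}$. A vector $x$ is recurrent if $T^{\omega_n}x\to x$ for some strictly increasing sequence $(\omega_n)$ of positive integers; $\mathrm{Rec}(T)$ is the set of recurrent vectors and $T$ is recurrent if $\mathrm{Rec}(T)$ is dense. $\mathfrak{C}$ is the set of strictly increasing sequences $\omega=(\omega_n)$ of positive integers such that $T^{\omega_n}x\to x$ for some $x\neq0$, and $\mathfrak{L}(\omega)=\{x:T^{\omega_n}x\to x\}$. $T$ is quasi-rigid if $\mathfrak{L}(\omega)$ is dense for some $\omega\in\mathfrak{C}$. A subset $F$ of a Banach space $V$ is asymptotically separated if there is a sequence $(g_n)$ of continuous linear functionals with $\liminf_n|g_n(x)|=0$ for all $x\in F$ and $\lim_n|g_n(x)|=+\infty$ for all $x\notin F$. $T$ is an Augé–Tapia operator of finite type $n$ if there exist an $n$-dimensional subspace $V\subset X$, a bounded linear projection $\mathbb{P}$ of $X$ onto $V$, and an asymptotically separated set $F\subset V$ with both $F$ and $V\setminus F$ dense in $V$, such that $A_T=\mathbb{P}^{-1}(V\setminus F)$ and $\mathrm{Rec}(T)=\mathbb{P}^{-1}(F)$. *)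

From HB Require Import structures.
From mathcomp Require Import all_boot all_order all_algebra.
From mathcomp Require Import complex.
From mathcomp Require Import all_classical all_reals all_analysis.
Set Implicit Arguments. Unset Strict Implicit. Unset Printing Implicit Defensive.
Import Order.TTheory GRing.Theory Num.Theory numFieldTopology.Exports numFieldNormedType.Exports.
Local Open Scope classical_set_scope.
Local Open Scope ring_scope.
Local Open Scope complex_scope.

Section Defs.
Context {R : realType} {X : normedModType R[i]}.

Definition separable_space : Prop :=
  exists D : set X, countable D /\ closure D = setT.

Definition lin_indep (n : nat) (b : 'I_n -> X) : Prop :=
  forall c : 'I_n -> R[i], \sum_(i < n) c i *: b i = 0 -> forall i, c i = 0.

Definition span_of (n : nat) (b : 'I_n -> X) : set X :=
  [set x | exists c : 'I_n -> R[i], x = \sum_(i < n) c i *: b i].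

Definition infinite_dimensional : Prop :=
  forall n : nat, exists b : 'I_n -> X, lin_indep b.

Definition subspace_of_dim (n : nat) (V : set X) : Prop :=
  exists b : 'I_n -> X, lin_indep b /\ V = span_of b.

Definition bounded_linear_op (T : X -> X) : Prop := linear T /\ continuous T.

Definition A_set (T : X -> X) : set X :=
  [set x | (fun n => `|iter n T x|) @ \oo --> +oo].

Definition strictly_incr_pos (w : nat -> nat) : Prop :=
  (forall k, (0 < w k)%N) /\ (forall a b, (a < b)%N -> (w a < w b)%N).

Definition Rec (T : X -> X) : set X :=
  [set x | exists w : nat -> nat, strictly_incr_pos w /\
           (fun k => iter (w k) T x) @ \oo --> x].

Definition recurrent (T : X -> X) : Prop := closure (Rec T) = setT.

Definition frakL (T : X -> X) (w : nat -> nat) : set X :=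
  [set x | (fun k => iter (w k) T x) @ \oo --> x].

Definition frakC (T : X -> X) : set (nat -> nat) :=
  [set w | strictly_incr_pos w /\ exists x, x != 0 /\ frakL T w x].

Definition quasi_rigid (T : X -> X) : Prop :=
  exists w, frakC T w /\ closure (frakL T w) = setT.

(* g is a linear functional on the subspace V (values outside V are irrelevant) *)
Definition linear_on (V : set X) (g : X -> (R[i])^o) : Prop :=
  forall (a : R[i]) u v, V u -> V v -> g (a *: u + v) = a * g u + g v.

Definition asymptotically_separated (V F : set X) : Prop :=
  exists g : nat -> X -> (R[i])^o,
    (forall k, linear_on V (g k) /\ {within V, continuous (g k)}) /\
    (forall x, F x -> limn_einf (fun k => (ComplexField.Normc.normc (g k x))%:E) = 0%E) /\
    (forall x, V x -> ~ F x -> (fun k => ComplexField.Normc.normc (g k x)) @ \oo --> +oo).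

Definition AugeTapia_finite_type (T : X -> X) (n : nat) : Prop :=
  exists V : set X, subspace_of_dim n V /\
  exists P : X -> X, bounded_linear_op P /\
    (forall x, V (P x)) /\ (forall v, V v -> P v = v) /\
  exists F : set X, F `<=` V /\ asymptotically_separated V F /\
    V `<=` closure F /\ V `<=` closure (V `\` F) /\
    A_set T = P @^-1` (V `\` F) /\ Rec T = P @^-1` F.

End Defs.

From HB Require Import structures.
From mathcomp Require Import all_boot all_order all_algebra.
From mathcomp Require Import complex.
From mathcomp Require Import all_classical all_reals all_analysis.
From mathcomp Require Import lra.
Set Implicit Arguments. Unset Strict Implicit. Unset Printing Implicit Defensive.
Import Order.TTheory GRing.Theory Num.Theory numFieldTopology.Exports numFieldNormedType.Exports.
Import ComplexField.Normc.
Local Open Scope classical_set_scope.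
Local Open Scope ring_scope.
Local Open Scope complex_scope.

(* Write B for the span of the basis of V. Since P is a linear projection onto
   B and Rec T = P^-1(F) with F dense in B, every x is approximated by the
   recurrent vectors x - P x + f, f in F: T is recurrent.
   For any sequence w, the set L(w) is a linear subspace contained in
   Rec T = P^-1(F). If it were dense, P(L(w)) would be a dense linear subspace
   of the finite-dimensional space B, hence all of B, so B would be contained
   in F, contradicting the density of B \ F in B.
   That a dense linear subspace of B is all of B is proved by induction on the
   basis: the span of all basis vectors but the last is closed, so the last
   coefficient of a vector of B is bounded by a multiple of its norm. This
   bound yields both closedness of spans (coefficients of approximating
   sequences are Cauchy) and the density statement (W contains a vector
   b_last + u with u in the smaller span, and projecting along it keeps W
   dense in the smaller span). *)

Section LinearFun.
Variables (S : pzRingType) (U V : lmodType S) (f : U -> V).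
Hypothesis f_linear : linear f.

Let fL : {linear U -> V} := HB.pack f (GRing.isLinear.Build _ _ _ _ f f_linear).

Lemma linear_fun0 : f 0 = 0.
Proof. exact: (raddf0 fL). Qed.

Lemma linear_funD u v : f (u + v) = f u + f v.
Proof. exact: (raddfD fL). Qed.

Lemma linear_funB u v : f (u - v) = f u - f v.
Proof. exact: (raddfB fL). Qed.

End LinearFun.

Section RealNorm.
Variable R : realType.
Local Notation K := R[i].

Lemma normr_normc (t : K) : `|t| = (normc t)%:C.
Proof. by case: t => a b; rewrite normc_def. Qed.

Lemma normc_ge0 (t : K) : 0 <= normc t.
Proof. by case: t => a b; rewrite sqrtr_ge0. Qed.

Lemma normc_Re_le (t : K) : `|complex.Re t| <= normc t.
Proof. by case: t => a b /=; rewrite -sqrtr_sqr ler_sqrt ?addr_ge0 ?sqr_ge0 // lerDl sqr_ge0. Qed.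

Lemma normc_Im_le (t : K) : `|complex.Im t| <= normc t.
Proof. by case: t => a b /=; rewrite -sqrtr_sqr ler_sqrt ?addr_ge0 ?sqr_ge0 // lerDr sqr_ge0. Qed.

Lemma normc_le_ReIm (t : K) : normc t <= `|complex.Re t| + `|complex.Im t|.
Proof.
case: t => a b /=.
rewrite -[leRHS]ger0_norm ?addr_ge0 // -sqrtr_sqr ler_sqrt ?sqr_ge0 //.
by rewrite sqrrD !real_normK ?num_real // -addrA lerD2l lerDr mulrn_wge0 ?mulr_ge0.
Qed.

Lemma cauchy_cvgR (a : nat -> R) :
  (forall e, 0 < e -> exists N, forall j k, (N <= j)%N -> (N <= k)%N -> `|a j - a k| < e) ->
  exists l, forall e, 0 < e -> exists N, forall j, (N <= j)%N -> `|a j - l| < e.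
Proof.
move=> a_cauchy; have : cvg (a @ \oo).
  apply: cauchy_cvg; apply: cauchy_exP => e /a_cauchy[N aN].
  by exists (a N), N => // j /= Nj; rewrite /ball /= aN.
move=> /cvgrPdist_lt a_cvg; exists (lim (a @ \oo)) => e /a_cvg[N _ aN].
by exists N => j Nj; rewrite distrC; apply: aN.
Qed.

Lemma cauchy_cvgC (s : nat -> K) :
  (forall e, 0 < e -> exists N, forall j k, (N <= j)%N -> (N <= k)%N -> normc (s j - s k) < e) ->
  exists l, forall e, 0 < e -> exists N, forall j, (N <= j)%N -> normc (s j - l) < e.
Proof.
move=> s_cauchy.
have [a Ha] : exists a, forall e, 0 < e -> exists N, forall j, (N <= j)%N ->
    `|complex.Re (s j) - a| < e.
  apply: cauchy_cvgR => e /s_cauchy[N sN]; exists N => j k Nj Nk.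
  apply: le_lt_trans (sN _ _ Nj Nk); apply: le_trans (normc_Re_le _).
  by case: (s j) (s k) => ? ? [? ?].
have [b Hb] : exists b, forall e, 0 < e -> exists N, forall j, (N <= j)%N ->
    `|complex.Im (s j) - b| < e.
  apply: cauchy_cvgR => e /s_cauchy[N sN]; exists N => j k Nj Nk.
  apply: le_lt_trans (sN _ _ Nj Nk); apply: le_trans (normc_Im_le _).
  by case: (s j) (s k) => ? ? [? ?].
exists (a +i* b) => e e0; have e20 : 0 < e / 2 by rewrite divr_gt0.
have [N1 aN1] := Ha _ e20; have [N2 bN2] := Hb _ e20.
exists (maxn N1 N2) => j; rewrite geq_max => /andP[j1 j2].
apply: le_lt_trans (normc_le_ReIm _) _; rewrite (splitr e).
by case: (s j) (aN1 _ j1) (bN2 _ j2) => ? ? /= ? ?; apply: ltrD.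
Qed.

(* Norms of normed spaces over [R[i]] are [R[i]]-valued; [rnorm] is the real number they are. *)
Definition rnorm {V : normedModType K} (x : V) : R := complex.Re `|x|.

Variable V : normedModType K.
Implicit Types x y : V.

Lemma normr_rnorm x : `|x| = (rnorm x)%:C.
Proof. by rewrite /rnorm; case: `|x| (normr_ge0 x) => a b /ger0_Im /= ->. Qed.

Lemma rnorm_ge0 x : 0 <= rnorm x.
Proof. by have := normr_ge0 x; rewrite lecE => /andP[]. Qed.

Lemma rnormD x y : rnorm (x + y) <= rnorm x + rnorm y.
Proof. by have := ler_normD x y; rewrite !normr_rnorm -rmorphD lecR. Qed.

Lemma rnormN x : rnorm (- x) = rnorm x.
Proof. by rewrite /rnorm normrN. Qed.

Lemma rnorm_distC x y : rnorm (x - y) = rnorm (y - x).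
Proof. by rewrite /rnorm distrC. Qed.

Lemma rnormZ (t : K) x : rnorm (t *: x) = normc t * rnorm x.
Proof. by apply: complexI; rewrite -normr_rnorm normrZ normr_normc normr_rnorm rmorphM. Qed.

Lemma rnorm_eq0 x : rnorm x = 0 -> x = 0.
Proof. by move=> x0; apply/normr0_eq0; rewrite normr_rnorm x0. Qed.

Lemma closure_rnormP (A : set V) x :
  closure A x <-> forall e : R, 0 < e -> exists2 y, A y & rnorm (x - y) < e.
Proof.
split=> [clAx e e0|approx B /nbhs_ballP[e /= e0 eB]].
  have e0' : (0 : K) < e%:C by rewrite ltcR.
  have [y [Ay]] := clAx _ (nbhsx_ballx x _ e0').
  by rewrite -ball_normE /ball_ /= normr_rnorm ltcR; exists y.
case: e e0 eB => a b /[dup] /ltW /ger0_Im /= ->.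
rewrite ltcE => /andP[_ /approx[y Ay xy]] aB; exists y; split => //; apply: aB.
by rewrite -ball_normE /ball_ /= normr_rnorm ltcR.
Qed.

End RealNorm.

Section Span.
Variable R : realType.
Local Notation K := R[i].
Variable X : normedModType K.
Implicit Types (W : set X) (u v : X).

Definition is_subspace W := W 0 /\ forall (a : K) u v, W u -> W v -> W (a *: u + v).

Lemma subspace0 W : is_subspace W -> W 0.
Proof. by case. Qed.

Lemma subspaceZ W a u : is_subspace W -> W u -> W (a *: u).
Proof. by move=> [W0 WL] Wu; rewrite -[_ *: _]addr0; apply: WL. Qed.

Lemma subspaceD W u v : is_subspace W -> W u -> W v -> W (u + v).
Proof. by move=> [_ WL] Wu Wv; rewrite -[u]scale1r; apply: WL. Qed.

Lemma subspaceB W u v : is_subspace W -> W u -> W v -> W (u - v).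
Proof. by move=> sW Wu Wv; rewrite -scaleN1r; apply: subspaceD => //; apply: subspaceZ. Qed.

Lemma subspace_span n (b : 'I_n -> X) : is_subspace (span_of b).
Proof.
split; first by exists (fun=> 0); rewrite big1 // => i _; rewrite scale0r.
move=> a _ _ [c ->] [d ->]; exists (fun i => a * c i + d i).
by rewrite scaler_sumr -big_split; apply: eq_bigr => i _; rewrite scalerDl scalerA.
Qed.

Lemma span_basis n (b : 'I_n -> X) i : span_of b (b i).
Proof.
exists (fun j => (j == i)%:R).
by rewrite (bigD1 i) //= eqxx scale1r big1 ?addr0 // => j /negPf ->; rewrite scale0r.
Qed.

Lemma span_ord0 (b : 'I_0 -> X) v : span_of b v -> v = 0.
Proof. by move=> [c ->]; rewrite big_ord0. Qed.

Definition drop_last n (b : 'I_n.+1 -> X) : 'I_n -> X := b \o widen_ord (leqnSn n).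

Definition extend_last n (c : 'I_n -> K) (t : K) (i : 'I_n.+1) : K :=
  if unlift ord_max i is Some j then c j else t.

Lemma widen_ord_lift n (i : 'I_n) : widen_ord (leqnSn n) i = lift ord_max i.
Proof. by apply: val_inj; rewrite /= /bump leqNgt ltn_ord. Qed.

Lemma sum_extend_last n (b : 'I_n.+1 -> X) c t :
  \sum_(i < n.+1) extend_last c t i *: b i = \sum_(i < n) c i *: drop_last b i + t *: b ord_max.
Proof.
rewrite big_ord_recr /= /extend_last unlift_none; congr (_ + _).
by apply: eq_bigr => i _; rewrite /drop_last /= widen_ord_lift liftK.
Qed.

Lemma span_drop_lastP n (b : 'I_n.+1 -> X) v :
  span_of b v <-> exists u t, span_of (drop_last b) u /\ v = u + t *: b ord_max.
Proof.
split=> [[c ->]|[u [t [[c ->] ->]]]]; last by exists (extend_last c t); rewrite sum_extend_last.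
exists (\sum_(i < n) c (widen_ord (leqnSn n) i) *: drop_last b i), (c ord_max).
by split; [exists (c \o widen_ord (leqnSn n))|rewrite big_ord_recr].
Qed.

Lemma span_drop_last n (b : 'I_n.+1 -> X) u : span_of (drop_last b) u -> span_of b u.
Proof. by move=> su; apply/span_drop_lastP; exists u, 0; rewrite scale0r addr0. Qed.

Lemma lin_indep_drop_last n (b : 'I_n.+1 -> X) : lin_indep b -> lin_indep (drop_last b).
Proof.
move=> ind c c0 i; have := ind (extend_last c 0).
rewrite sum_extend_last scale0r addr0 => /(_ c0 (widen_ord (leqnSn n) i)).
by rewrite /extend_last widen_ord_lift liftK.
Qed.

Lemma lin_indep_last n (b : 'I_n.+1 -> X) : lin_indep b -> ~ span_of (drop_last b) (b ord_max).
Proof.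
move=> ind [c bE]; have := ind (extend_last c (-1)).
rewrite sum_extend_last -bE scaleN1r subrr => /(_ erefl ord_max).
by rewrite /extend_last unlift_none => /eqP; rewrite oppr_eq0 oner_eq0.
Qed.

End Span.

Section FiniteDim.
Variable R : realType.
Local Notation K := R[i].
Variable X : normedModType K.

Lemma eventually_natSinv_lt (e : R) : 0 < e -> exists N, forall j, (N <= j)%N -> j.+1%:R^-1 < e.
Proof. by move=> e0; have [N _ NS] := near_infty_natSinv_lt (PosNum e0); exists N. Qed.

Lemma last_coef_bound n (b : 'I_n.+1 -> X) :
  lin_indep b -> closed (span_of (drop_last b)) ->
  exists2 d : R, 0 < d & forall u t,
    span_of (drop_last b) u -> d * normc t <= rnorm (u + t *: b ord_max).
Proof.
move=> ind cl; set B := span_of (drop_last b).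
have [d d0 Hd] : exists2 d : R, 0 < d & forall u, B u -> d <= rnorm (b ord_max - u).
  apply: contrapT => no_gap; apply: (lin_indep_last ind); apply/cl/closure_rnormP => e e0.
  apply: contrapT => far; apply: no_gap; exists e => // u Bu.
  by rewrite leNgt; apply/negP => close; apply: far; exists u.
exists d => // u t Bu; have [->|t0] := eqVneq t 0; first by rewrite normc0 mulr0 rnorm_ge0.
have -> : u + t *: b ord_max = t *: (b ord_max - (- t^-1 *: u)).
  by rewrite scalerDr scalerN scalerA mulrN mulfV // scaleN1r opprK addrC.
rewrite rnormZ mulrC ler_wpM2l ?normc_ge0 // Hd //.
exact: subspaceZ _ (subspace_span _) Bu.
Qed.

Lemma closure_span_last_coef n (b : 'I_n.+1 -> X) x :
  lin_indep b -> closed (span_of (drop_last b)) -> closure (span_of b) x ->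
  exists l, closure (span_of (drop_last b)) (x - l *: b ord_max).
Proof.
move=> ind cl /closure_rnormP x_approx; have [d d0 Hd] := last_coef_bound ind cl.
set B := span_of (drop_last b); set bl := b ord_max.
have /choice[f Hf] : forall j : nat, exists p : X * K,
    B p.1 /\ rnorm (x - (p.1 + p.2 *: bl)) < j.+1%:R^-1.
  move=> j; have [|y /span_drop_lastP[u [t [Bu ->]]] xy] := x_approx j.+1%:R^-1.
    by rewrite invr_gt0.
  by exists (u, t).
set u := fun j => (f j).1; set t := fun j => (f j).2.
have t_close j k : d * normc (t j - t k) <= j.+1%:R^-1 + k.+1%:R^-1.
  have := Hd (u j - u k) (t j - t k) (subspaceB (subspace_span _) (Hf j).1 (Hf k).1).
  have -> : u j - u k + (t j - t k) *: bl = (x - (u k + t k *: bl)) - (x - (u j + t j *: bl)).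
    by rewrite scalerBl [in RHS]opprB [RHS]addrC [RHS]addrA subrK opprD addrACA.
  move/le_trans; apply; apply: le_trans (rnormD _ _) _; rewrite rnormN addrC.
  by apply: lerD; apply: ltW; [exact: (Hf j).2|exact: (Hf k).2].
have [l t_cvg] : exists l, forall e, 0 < e -> exists N, forall j, (N <= j)%N -> normc (t j - l) < e.
  apply: cauchy_cvgC => e e0.
  have [|N NS] := @eventually_natSinv_lt (d * e / 2); first by rewrite divr_gt0 ?mulr_gt0.
  exists N => j k Nj Nk; rewrite -(ltr_pM2l d0); apply: le_lt_trans (t_close j k) _.
  by rewrite [d * e]splitr ltrD ?NS.
exists l; apply/closure_rnormP => e e0.
have e2_gt0 : 0 < e / 2 by rewrite divr_gt0.
have bl1_gt0 : 0 < rnorm bl + 1 by rewrite ltr_wpDl ?rnorm_ge0.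
have [N1 NS1] := eventually_natSinv_lt e2_gt0.
have [|N2 tN2] := t_cvg (e / 2 / (rnorm bl + 1)); first by rewrite divr_gt0.
set j := maxn N1 N2; exists (u j); first exact: (Hf j).1.
have -> : x - l *: bl - u j = (x - (u j + t j *: bl)) + (t j - l) *: bl.
  by rewrite scalerBl opprD !addrA subrK addrAC.
apply: le_lt_trans (rnormD _ _) _; rewrite rnormZ.
have xj : rnorm (x - (u j + t j *: bl)) < e / 2.
  by apply: lt_trans (Hf j).2 _; apply/NS1/leq_maxl.
have tj : normc (t j - l) * (rnorm bl + 1) < e / 2 by rewrite -ltr_pdivlMr // tN2 ?leq_maxr.
have := rnorm_ge0 bl; have := normc_ge0 (t j - l); nra.
Qed.

Lemma closed_span n (b : 'I_n -> X) : lin_indep b -> closed (span_of b).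
Proof.
elim: n b => [|n IH] b ind x.
  move=> /closure_rnormP x_approx; suff -> : x = 0 by apply: subspace0 (subspace_span b).
  apply: rnorm_eq0; apply/eqP; rewrite eq_le rnorm_ge0 andbT leNgt; apply/negP => x0.
  by have [y /span_ord0 ->] := x_approx _ x0; rewrite subr0 ltxx.
move=> /(closure_span_last_coef ind (IH _ (lin_indep_drop_last ind)))[l].
move=> /(IH _ (lin_indep_drop_last ind)) Bx.
by apply/span_drop_lastP; exists (x - l *: b ord_max), l; rewrite subrK.
Qed.

End FiniteDim.

Section DenseSubspace.
Variable R : realType.
Variable X : normedModType R[i].
Variable W : set X.
Hypothesis W_subspace : is_subspace W.

Lemma subspace_last_dir n (b : 'I_n.+1 -> X) :
  lin_indep b -> span_of b `<=` closure (W `&` span_of b) ->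
  exists2 u, span_of (drop_last b) u & W (b ord_max + u).
Proof.
move=> ind dense.
have [d d0 Hd] := last_coef_bound ind (closed_span (lin_indep_drop_last ind)).
have /closure_rnormP/(_ d d0)[w [Ww /span_drop_lastP[u [t [Bu wE]]]]] :=
  dense _ (span_basis b ord_max).
have [t0|t_neq0] := eqVneq t 0.
  have := Hd (0 - u) 1 (subspaceB (subspace_span _) (subspace0 (subspace_span _)) Bu).
  rewrite wE t0 sub0r normc1 mulr1 scale1r addrC scale0r addr0.
  by move=> /le_lt_trans/[apply]; rewrite ltxx.
exists (t^-1 *: u); first exact: subspaceZ _ (subspace_span _) Bu.
have -> : b ord_max + t^-1 *: u = t^-1 *: w by rewrite wE scalerDr scalerA mulVf // scale1r addrC.
exact: subspaceZ.
Qed.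

Lemma dense_drop_last n (b : 'I_n.+1 -> X) u :
  lin_indep b -> span_of b `<=` closure (W `&` span_of b) ->
  span_of (drop_last b) u -> W (b ord_max + u) ->
  span_of (drop_last b) `<=` closure (W `&` span_of (drop_last b)).
Proof.
move=> ind dense Bu Wbu v Bv; apply/closure_rnormP => eps eps0.
have [d d0 Hd] := last_coef_bound ind (closed_span (lin_indep_drop_last ind)).
set bl := b ord_max; set ne := rnorm (bl + u).
have dne_gt0 : 0 < d + ne by rewrite ltr_wpDr ?rnorm_ge0.
have /closure_rnormP/(_ (eps * d / (d + ne)))[|w [Ww /span_drop_lastP[u' [t [Bu' wE]]]] vw] :=
  dense _ (span_drop_last Bv).
  by rewrite divr_gt0 ?mulr_gt0.
exists (w - t *: (bl + u)); first split.
- exact: subspaceB W_subspace Ww (subspaceZ t W_subspace Wbu).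
- rewrite wE scalerDr opprD addrA addrK.
  exact: subspaceB (subspace_span _) Bu' (subspaceZ t (subspace_span _) Bu).
have t_bound : d * normc t <= rnorm (v - w).
  by rewrite rnorm_distC wE addrAC; apply: Hd; apply: subspaceB (subspace_span _) Bu' Bv.
have -> : v - (w - t *: (bl + u)) = (v - w) + t *: (bl + u) by rewrite opprB addrA addrAC.
apply: le_lt_trans (rnormD _ _) _; rewrite rnormZ -/ne.
move: vw; rewrite ltr_pdivlMr // => vw.
have := rnorm_ge0 (bl + u); have := normc_ge0 t; rewrite -/ne; nra.
Qed.

Lemma span_sub_dense_subspace n (b : 'I_n -> X) :
  lin_indep b -> span_of b `<=` closure (W `&` span_of b) -> span_of b `<=` W.
Proof.
elim: n b => [|n IH] b ind dense v; first by move/span_ord0 ->; apply: subspace0.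
have [u Bu Wbu] := subspace_last_dir ind dense.
have B_W := IH _ (lin_indep_drop_last ind) (dense_drop_last ind dense Bu Wbu).
move=> /span_drop_lastP[v' [s [Bv' ->]]].
have -> : v' + s *: b ord_max = s *: (b ord_max + u) + (v' - s *: u).
  by rewrite scalerDr addrACA subrr addr0 addrC.
apply: subspaceD W_subspace (subspaceZ s W_subspace Wbu) (B_W _ _).
exact: subspaceB (subspace_span _) Bv' (subspaceZ s (subspace_span _) Bu).
Qed.

End DenseSubspace.

Section Operators.
Variable R : realType.
Variable X : normedModType R[i].

Lemma linear_iter (T : X -> X) n : linear T -> linear (iter n T).
Proof. by move=> T_lin a u v; elim: n => //= n ->; rewrite T_lin. Qed.

Lemma subspace_frakL (T : X -> X) w : linear T -> is_subspace (frakL T w).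
Proof.
move=> T_lin; split=> [|a x y Lx Ly]; rewrite /frakL /=.
  have -> : (fun k => iter (w k) T 0) = fun=> 0.
    by apply/funext => k; apply: linear_fun0; apply: linear_iter.
  exact: cvg_cst.
have -> : (fun k => iter (w k) T (a *: x + y)) =
    (fun k => a *: iter (w k) T x) \+ (fun k => iter (w k) T y).
  by apply/funext => k; rewrite linear_iter.
apply: cvgD => //; apply: cvgZ Lx; exact: cvg_cst.
Qed.

Lemma subspace_image (P : X -> X) (A : set X) :
  linear P -> is_subspace A -> is_subspace (P @` A).
Proof.
move=> P_lin [A0 AL]; split; first by exists 0 => //; apply: linear_fun0.
by move=> a _ _ [x Ax <-] [y Ay <-]; exists (a *: x + y); [apply: AL|rewrite P_lin].
Qed.

Lemma image_closure_sub {T U : topologicalType} (f : T -> U) (A : set T) :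
  continuous f -> f @` closure A `<=` closure (f @` A).
Proof.
move=> f_cont _ [x Ax <-].
have /closureS/(_ _ Ax) : A `<=` f @^-1` closure (f @` A).
  by move=> y Ay; apply: subset_closure; exists y.
by apply: preimage_closed; [move=> y _; apply: f_cont|apply: closed_closure].
Qed.

Lemma dense_preimage_projection (V F : set X) (P : X -> X) :
  linear P -> (forall x, V (P x)) -> (forall v, V v -> P v = v) ->
  F `<=` V -> V `<=` closure F -> closure (P @^-1` F) = setT.
Proof.
move=> P_lin PV Pid FV VF; apply/seteqP; split => // x _.
apply/closure_rnormP => e e0; have /closure_rnormP/(_ e e0)[f Ff Pxf] := VF _ (PV x).
exists (x - P x + f).
  rewrite /preimage /= (linear_funD P_lin) (linear_funB P_lin).
  by rewrite (Pid _ (PV x)) (Pid _ (FV _ Ff)) subrr add0r.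
by rewrite opprD opprB addrA [x + _]addrC subrK.
Qed.

Lemma span_sub_image_dense_subspace n (b : 'I_n -> X) (P : X -> X) (L : set X) :
  lin_indep b -> linear P -> continuous P ->
  (forall x, span_of b (P x)) -> (forall v, span_of b v -> P v = v) ->
  is_subspace L -> closure L = setT -> span_of b `<=` P @` L.
Proof.
move=> ind P_lin P_cont PV Pid L_sub L_dense.
apply: (span_sub_dense_subspace (subspace_image P_lin L_sub) ind) => v Bv.
rewrite setIidl; last by move=> _ [x _ <-].
by rewrite -(Pid _ Bv); apply: image_closure_sub P_cont _ _; exists v; rewrite ?L_dense.
Qed.

End Operators.

Unset Implicit Arguments.
Theorem theorem3p6 (R : realType) (X : completeNormedModType R[i]) (T : X -> X) :
  @separable_space R X -> @infinite_dimensional R X -> bounded_linear_op T ->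
  forall n : nat, AugeTapia_finite_type T n ->
  recurrent T /\ ~ quasi_rigid T.
Proof.
(* Only the description of Rec T and the density of F and of V \ F in V are used. *)
move=> _ _ [T_lin _] n [V [[b [ind ->]] [P [[P_lin P_cont] [PV [Pid]]]]]].
move=> [F [FB [_ [BF [BnF [_ RecE]]]]]]; split.
  by rewrite /recurrent RecE; apply: dense_preimage_projection P_lin PV Pid FB BF.
move=> [w [[w_incr _] L_dense]].
have /closure_rnormP/(_ 1 ltr01)[y [By nFy] _] := BnF _ (subspace0 (subspace_span b)).
have [x Lx Pxy] := span_sub_image_dense_subspace ind P_lin P_cont PV Pid
  (subspace_frakL w T_lin) L_dense By.
have : Rec T x by exists w.
by rewrite RecE /preimage /= Pxy.
Qed.
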